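(* Let $(a_n)$ be a strictly decreasing sequence of positive reals with $a_n\to0$ and $(b_n)$ positive reals such that $\phi_{ij}:=\frac{b_i/b_j}{1+a_i/a_j}\le C\mu^{|i-j|}$ for all $i,j\in\mathbb{N}$ and some $C>0$, $\mu\in(0,1)$. Then $(a_n/b_n)\in\ell^1$; more precisely, $\sum_{j}a_j/b_j\le\kappa\,(a_1+a_i)/b_i$ for every $i\in\mathbb{N}$, where $\kappa:=C\frac{1+\mu}{1-\mu}$. *)

From Stdlib Require Import Reals.
From Coquelicot Require Import Coquelicot.
Open Scope R_scope.

Definition natdist (i j : nat) : nat := (Nat.max i j - Nat.min i j)%nat.

Definition phi (a b : nat -> R) (i j : nat) : R :=
  (b i / b j) / (1 + a i / a j).

(** Writing [a_j / b_j = phi_ij (a_i + a_j) / b_i] and using [a_j <= a_0] gives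
    [a_j / b_j <= C mu^|i-j| (a_0 + a_i) / b_i], so every partial sum of
    [a_n / b_n] is bounded by [C (a_0 + a_i) / b_i] times a two-sided geometric
    sum [sum_j mu^|i-j| <= (1 + mu) / (1 - mu)].  A series of nonnegative terms
    with bounded partial sums converges, and its sum obeys the same bound. *)

From Stdlib Require Import Reals Lra Lia.
From Coquelicot Require Import Coquelicot.
Open Scope R_scope.

Lemma natdist_0_l (j : nat) : natdist 0 j = j.
Proof. unfold natdist; lia. Qed.

Lemma natdist_S_0 (i : nat) : natdist (S i) 0 = S i.
Proof. unfold natdist; lia. Qed.

Lemma natdist_S_S (i j : nat) : natdist (S i) (S j) = natdist i j.
Proof. unfold natdist; lia. Qed.

(* The sharp bound [(1 + mu - mu^(i+1)) / (1 - mu)] is what makes the induction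
   on [i] go through: moving the centre from [i] to [i+1] adds exactly [mu^(i+1)]. *)
Lemma sum_pow_natdist_le (mu : R) (i N : nat) : 0 < mu < 1 ->
  sum_f_R0 (fun j => mu ^ natdist i j) N <= (1 + mu - mu ^ S i) / (1 - mu).
Proof.
  intros mu_01. revert N. induction i as [|i IH]; intros N.
  - rewrite (sum_eq _ (fun j => mu ^ j)) by (intros j _; now rewrite natdist_0_l).
    rewrite tech3 by lra.
    assert (0 < mu ^ S N) by (apply pow_lt; lra).
    apply Rmult_le_compat_r; [apply Rlt_le, Rinv_0_lt_compat |]; rewrite ?pow_1; lra.
  - assert (bound_S : (1 + mu - mu ^ S (S i)) / (1 - mu)
                      = mu ^ S i + (1 + mu - mu ^ S i) / (1 - mu))
      by (simpl; field; lra).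
    rewrite bound_S.
    destruct N as [|N].
    + cbn [sum_f_R0]. rewrite natdist_S_0.
      assert (mu ^ S i < 1) by (apply pow_lt_1_compat; lra || lia).
      assert (0 <= (1 + mu - mu ^ S i) / (1 - mu))
        by (apply Rdiv_le_0_compat; lra).
      lra.
    + rewrite decomp_sum by lia. simpl Init.Nat.pred.
      rewrite natdist_S_0.
      rewrite (sum_eq _ (fun j => mu ^ natdist i j))
        by (intros j _; now rewrite natdist_S_S).
      specialize (IH N). lra.
Qed.

Lemma sum_pow_natdist_le_geom (mu : R) (i N : nat) : 0 < mu < 1 ->
  sum_f_R0 (fun j => mu ^ natdist i j) N <= (1 + mu) / (1 - mu).
Proof.
  intros mu_01. eapply Rle_trans; [now apply sum_pow_natdist_le |].
  assert (0 < mu ^ S i) by (apply pow_lt; lra).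
  apply Rmult_le_compat_r; [apply Rlt_le, Rinv_0_lt_compat |]; lra.
Qed.

Lemma series_of_bounded_partial_sums (u : nat -> R) (M : R) :
  (forall n, 0 <= u n) -> (forall N, sum_f_R0 u N <= M) ->
  ex_series u /\ Series u <= M.
Proof.
  intros u_ge0 sum_le.
  assert (sum_n_le : forall N, sum_n u N <= M)
    by (intros N; rewrite sum_n_Reals; apply sum_le).
  assert (sum_n_incr : forall N, sum_n u N <= sum_n u (S N)).
  { intros N. rewrite sum_Sn. specialize (u_ge0 (S N)).
    unfold plus; simpl; lra. }
  destruct (ex_finite_lim_seq_incr _ _ sum_n_incr sum_n_le) as [l lim_l].
  assert (series_l : is_series u l) by exact lim_l.
  split; [now exists l |].
  rewrite (is_series_unique u l series_l).
  exact (is_lim_seq_le _ (fun _ => M) l M sum_n_le lim_l (is_lim_seq_const M)).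
Qed.

Lemma ratio_eq_phi_mul (a b : nat -> R) (i j : nat) :
  0 < a i -> 0 < a j -> 0 < b i -> 0 < b j ->
  a j / b j = phi a b i j * ((a i + a j) / b i).
Proof.
  intros ai_pos aj_pos bi_pos bj_pos.
  assert (0 < a i / a j) by (apply Rdiv_lt_0_compat; lra).
  unfold phi. field. repeat split; lra.
Qed.

Lemma ratio_le_geom (a b : nat -> R) (C mu : R) (i j : nat) :
  (forall n, 0 < a n) -> Un_decreasing a -> (forall n, 0 < b n) ->
  phi a b i j <= C * mu ^ natdist i j ->
  a j / b j <= C * mu ^ natdist i j * ((a 0%nat + a i) / b i).
Proof.
  intros a_pos a_decr b_pos phi_le.
  pose proof (a_pos i). pose proof (a_pos j).
  pose proof (b_pos i). pose proof (b_pos j).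
  assert (phi_pos : 0 < phi a b i j).
  { assert (0 < a i / a j) by (apply Rdiv_lt_0_compat; auto).
    unfold phi. apply Rdiv_lt_0_compat; [apply Rdiv_lt_0_compat |]; lra. }
  rewrite (ratio_eq_phi_mul a b i j) by auto.
  assert (aj_le_a0 : a j <= a 0%nat) by (apply decreasing_prop; [assumption | lia]).
  assert ((a i + a j) / b i <= (a 0%nat + a i) / b i).
  { apply Rmult_le_compat_r; [apply Rlt_le, Rinv_0_lt_compat |]; lra. }
  assert (0 < (a i + a j) / b i) by (apply Rdiv_lt_0_compat; lra).
  apply Rmult_le_compat; lra.
Qed.

Lemma sum_ratio_le (a b : nat -> R) (C mu : R) (i N : nat) :
  (forall n, 0 < a n) -> Un_decreasing a -> (forall n, 0 < b n) ->
  0 < C -> 0 < mu < 1 ->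
  (forall j, phi a b i j <= C * mu ^ natdist i j) ->
  sum_f_R0 (fun n => a n / b n) N
    <= C * (1 + mu) / (1 - mu) * ((a 0%nat + a i) / b i).
Proof.
  intros a_pos a_decr b_pos C_pos mu_01 phi_le.
  set (K := (a 0%nat + a i) / b i).
  assert (0 < K).
  { pose proof (a_pos 0%nat); pose proof (a_pos i).
    apply Rdiv_lt_0_compat; [lra | auto]. }
  apply (Rle_trans _ (sum_f_R0 (fun n => mu ^ natdist i n * (C * K)) N)).
  { apply sum_Rle. intros n _.
    replace (mu ^ natdist i n * (C * K)) with (C * mu ^ natdist i n * K) by ring.
    now apply ratio_le_geom. }
  rewrite <- scal_sum.
  replace (C * (1 + mu) / (1 - mu) * K) with (C * K * ((1 + mu) / (1 - mu)))
    by (field; lra).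
  apply Rmult_le_compat_l; [nra |]. now apply sum_pow_natdist_le_geom.
Qed.

Theorem mainTheorem16 (a b : nat -> R) (C mu : R)
  (ha_pos : forall n, 0 < a n)
  (ha_dec : forall n, a (S n) < a n)
  (ha_lim : is_lim_seq a 0)
  (hb_pos : forall n, 0 < b n)
  (hC : 0 < C) (hmu0 : 0 < mu) (hmu1 : mu < 1)
  (hphi : forall i j, phi a b i j <= C * mu ^ (natdist i j)) :
  ex_series (fun n => a n / b n) /\
  forall i, Series (fun n => a n / b n)
            <= (C * (1 + mu) / (1 - mu)) * ((a 0%nat + a i) / b i).
Proof.
  assert (a_decr : Un_decreasing a) by (intros n; apply Rlt_le, ha_dec).
  assert (terms_ge0 : forall n, 0 <= a n / b n)
    by (intros n; apply Rlt_le, Rdiv_lt_0_compat; auto).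
  assert (bounded : forall i, ex_series (fun n => a n / b n) /\
            Series (fun n => a n / b n)
              <= C * (1 + mu) / (1 - mu) * ((a 0%nat + a i) / b i)).
  { intros i. apply series_of_bounded_partial_sums; [exact terms_ge0 |].
    intros N. apply sum_ratio_le; auto. }
  split; [exact (proj1 (bounded 0%nat)) | intros i; exact (proj2 (bounded i))].
Qed.
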